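(* Let $\alpha>0$ be real. If $\alpha=1$ let $\mathcal X=\mathbb{CP}^1$ and $f(x)=1-x$; if $\alpha\neq1$ let $\mathcal X=(0,1)\subset\mathbb R$ and $f(x)=(1-x^\alpha)^{1/\alpha}$, so that in both cases $x^\alpha+f(x)^\alpha=1$. Let $S(x,y)=(u,v)=\big(x f(y)/f(xy),\,xy\big)$. Then: (i) $f(u)f(v)=f(x)$ for all $x,y$, with $(u,v)=S(x,y)$ (hence $S$ is a pentagon map); (ii) $S$ preserves the Poisson structure $\Omega=m(x,y)\,\partial x\wedge\partial y$ with $m(x,y)=y\,f(y)^{\alpha-1}f(x)^\alpha$, i.e. $m(u,v)/m(x,y)$ equals the Jacobian determinant $\det\frac{\partial(u,v)}{\partial(x,y)}$; (iii) $I(x,y)=x f(y)$ is invariant: $I(u,v)=I(x,y)$. Consequently $S$ is a Liouville integrable map.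
   Context: A map of the plane is Liouville integrable (in the sense of Veselov) if it preserves a Poisson structure and admits a functionally independent invariant function (one suffices in two dimensions). Pentagon map: for $S:Y\times Y\to Y\times Y$, with $S_{12}=S\times\mathrm{id}$, $S_{23}=\mathrm{id}\times S$, $S_{13}(y_1,y_2,y_3)=(p,y_2,q)$ where $(p,q)=S(y_1,y_3)$, one requires $S_{12}S_{13}S_{23}=S_{23}S_{12}$. *)

From HB Require Import structures.
From mathcomp Require Import all_boot all_order all_algebra.
From mathcomp Require Import all_classical all_reals all_analysis.
From mathcomp Require Import complex.
Set Implicit Arguments. Unset Strict Implicit. Unset Printing Implicit Defensive.
Import Order.TTheory GRing.Theory Num.Theory.
Import numFieldNormedType.Exports.
Local Open Scope ring_scope.

(* Generic notions for maps of a 2-dimensional space K x K, where K is *)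
(* a numFieldType (K = R real, or K = R[i] complex, in which case the  *)
(* derivatives below are complex (holomorphic) derivatives).           *)

Section Generic.
Variable K : numFieldType.

Definition pdx (g : K -> K -> K) (x y : K) : K :=
  derive1 (fun t : K^o => (g t y : K^o)) x.
Definition pdy (g : K -> K -> K) (x y : K) : K :=
  derive1 (fun t : K^o => (g x t : K^o)) y.

Definition has_partials (g : K -> K -> K) (x y : K) : Prop :=
  derivable (fun t : K^o => (g t y : K^o)) x 1 /\
  derivable (fun t : K^o => (g x t : K^o)) y 1.

Definition jac_det2 (S : K -> K -> K * K) (x y : K) : K :=
  let u := fun a b => (S a b).1 in
  let v := fun a b => (S a b).2 in
  pdx u x y * pdy v x y - pdy u x y * pdx v x y.

Definition map_has_partials (S : K -> K -> K * K) (x y : K) : Prop :=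
  has_partials (fun a b => (S a b).1) x y /\
  has_partials (fun a b => (S a b).2) x y.

(* S preserves the Poisson structure  m(x,y) dx /\ dy  on the set D:   *)
(* the push-forward of the bivector equals itself, i.e.                *)
(* m(S(x,y)) = det(dS(x,y)) * m(x,y).                                  *)
Definition preserves_poisson (D : set (K * K)) (S : K -> K -> K * K)
    (m : K -> K -> K) : Prop :=
  forall x y, D (x, y) ->
    map_has_partials S x y /\
    m (S x y).1 (S x y).2 = jac_det2 S x y * m x y.

Definition invariant_on (D : set (K * K)) (S : K -> K -> K * K)
    (I : K -> K -> K) : Prop :=
  forall x y, D (x, y) -> I (S x y).1 (S x y).2 = I x y.

(* A single function is functionally independent iff its differential *)
(* is not identically zero on the domain.                              *)
Definition functionally_independent (D : set (K * K)) (I : K -> K -> K) : Prop :=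
  (forall x y, D (x, y) -> has_partials I x y) /\
  exists x y, D (x, y) /\ (pdx I x y != 0 \/ pdy I x y != 0).

(* Liouville integrability in the sense of Veselov, in dimension 2:    *)
(* S preserves a (nondegenerate on D) Poisson structure and admits one *)
(* functionally independent invariant.                                 *)
Definition liouville_integrable2 (D : set (K * K)) (S : K -> K -> K * K) : Prop :=
  exists (m : K -> K -> K) (I : K -> K -> K),
    (forall x y, D (x, y) -> m x y != 0) /\
    preserves_poisson D S m /\ invariant_on D S I /\ functionally_independent D I.

End Generic.

Section Pentagon.
Variable Y : Type.
Definition S12 (S : Y -> Y -> Y * Y) (t : Y * Y * Y) : Y * Y * Y :=
  let: (a, b, c) := t in ((S a b).1, (S a b).2, c).
Definition S23 (S : Y -> Y -> Y * Y) (t : Y * Y * Y) : Y * Y * Y :=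
  let: (a, b, c) := t in (a, (S b c).1, (S b c).2).
Definition S13 (S : Y -> Y -> Y * Y) (t : Y * Y * Y) : Y * Y * Y :=
  let: (a, b, c) := t in ((S a c).1, b, (S a c).2).
Definition pentagon_on (P : set (Y * Y * Y)) (S : Y -> Y -> Y * Y) : Prop :=
  forall t, P t -> S12 S (S13 S (S23 S t)) = S23 S (S12 S t).
End Pentagon.

(* Case alpha = 1 : X = CP^1, worked in the affine coordinate x in C.  *)
Section CaseOne.
Variable R : realType.
Local Notation C := (R[i]).
Definition fC (x : C) : C := 1 - x.
Definition SC (x y : C) : C * C := (x * fC y / fC (x * y), x * y).
(* m(x,y) = y f(y)^(alpha-1) f(x)^alpha with alpha = 1 *)
Definition mC (x y : C) : C := y * fC y ^+ 0 * fC x.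
Definition IC (x y : C) : C := x * fC y.
End CaseOne.

Section CaseGen.
Variable R : realType.
Variable alpha : R.
Definition X01 : set R := [set x | 0 < x < 1].
Definition fR (x : R) : R := (1 - x `^ alpha) `^ alpha^-1.
Definition SR (x y : R) : R * R := (x * fR y / fR (x * y), x * y).
Definition mR (x y : R) : R := y * fR y `^ (alpha - 1) * fR x `^ alpha.
Definition IR (x y : R) : R := x * fR y.
End CaseGen.

From HB Require Import structures.
From mathcomp Require Import all_boot all_order all_algebra.
From mathcomp Require Import all_classical all_reals all_analysis.
From mathcomp Require Import complex.
From mathcomp Require Import ring lra.
Import Order.TTheory GRing.Theory Num.Theory.
Import numFieldNormedType.Exports.
Local Open Scope ring_scope.
Local Open Scope classical_set_scope.

(* Both maps are instances of S_f(x, y) = (x f(y) / f(xy), xy).  Writing X = x^alpha,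
   the relation x^alpha + f(x)^alpha = 1 makes the power map conjugate S_f on (0,1)
   to the rational map S_1 of the case alpha = 1, f(t) = 1 - t, so the product
   identity and the pentagon equation reduce to identities between rational
   functions.  The invariant is immediate: u f(v) = x f(y) f(xy) / f(xy).  For any
   differentiable f the Jacobian determinant of S_f is x (f(y) - y f'(y)) / f(xy),
   and it agrees with m(u, v) / m(x, y) once f(u) = f(x) / f(xy) is used. *)

Section NumFieldDerive.
Context {K : numFieldType}.
Implicit Types (f g : K^o -> K^o) (x a b c : K).

(* The library's [is_derive1_comp] is stated over a [realType]; the complex case
   needs the chain rule over a [numFieldType]. *)
Lemma numfield_is_derive1_comp {f g x a b} :
  is_derive (g x) 1 f a -> is_derive x 1 g b -> is_derive x 1 (f \o g) (a * b).
Proof.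
move=> [dfg <-{a}] [dg <-{b}].
have dfgx : differentiable (f \o g) x.
  by apply/differentiable_comp; apply/derivable1_diffP.
apply: DeriveDef; first exact/derivable1_diffP.
rewrite -derive1E derive1E' // diff_comp; try exact/derivable1_diffP.
rewrite -!derive1E !derive1E'; try exact/derivable1_diffP.
by rewrite /= -[X in 'd _ _ X = _]mulr1 [LHS]linearZ mulrC.
Qed.

Lemma numfield_is_deriveV {f x a} : f x != 0 -> is_derive x 1 f a ->
  is_derive x 1 (fun t => (f t)^-1 : K^o) (- (f x) ^- 2 * a).
Proof.
move=> fx0 [df <-{a}]; apply: DeriveDef; first exact: derivableV.
by rewrite deriveV.
Qed.

Lemma is_derive1_mul {f g x a b} : is_derive x 1 f a -> is_derive x 1 g b ->
  is_derive x 1 (fun t => f t * g t : K^o) (f x * b + g x * a).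
Proof. exact: is_deriveM. Qed.

Lemma is_derive1_sub {f g x a b} : is_derive x 1 f a -> is_derive x 1 g b ->
  is_derive x 1 (fun t => f t - g t : K^o) (a - b).
Proof. exact: is_deriveB. Qed.

Lemma is_derive1_mulr_cst x c : is_derive x 1 (fun t : K^o => t * c : K^o) c.
Proof.
apply: is_derive_eq (is_derive1_mul (is_derive_id x 1) (is_derive_cst c x 1)) _.
by rewrite /= mulr0 add0r mulr1.
Qed.

Lemma is_derive1_mull_cst x c : is_derive x 1 (fun t : K^o => c * t : K^o) c.
Proof.
apply: is_derive_eq (is_derive1_mul (is_derive_cst c x 1) (is_derive_id x 1)) _.
by rewrite /= mulr0 addr0 mulr1.
Qed.

Lemma derive1_val {f x a} : is_derive x 1 f a -> derive1 f x = a.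
Proof. by move=> fa; rewrite derive1E derive_val. Qed.

End NumFieldDerive.

(* [SC] and [SR alpha] are, by conversion, [Smap fC] and [Smap (fR alpha)]. *)
Definition Smap {F : fieldType} (f : F -> F) (x y : F) : F * F :=
  (x * f y / f (x * y), x * y).

Lemma Smap_invariant (F : fieldType) (f : F -> F) (x y : F) :
  f (x * y) != 0 -> (Smap f x y).1 * f (Smap f x y).2 = x * f y.
Proof. by move=> fxy0; rewrite /= divfK. Qed.

Lemma Smap_jacobian {K : numFieldType} {f : K -> K} {x y d d' : K} :
  is_derive (y : K^o) 1 (f : K^o -> K^o) d ->
  is_derive (x * y : K^o) 1 (f : K^o -> K^o) d' -> f (x * y) != 0 ->
  map_has_partials (Smap f) x y /\
  jac_det2 (Smap f) x y = x * (f y - y * d) / f (x * y).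
Proof.
move=> dfy dfxy fxy0.
have dfxy_x := numfield_is_derive1_comp (g := fun t => t * y) dfxy (is_derive1_mulr_cst x y).
have dfxy_y := numfield_is_derive1_comp (g := fun t => x * t) dfxy (is_derive1_mull_cst y x).
have dux := is_derive1_mul (is_derive1_mulr_cst x (f y)) (numfield_is_deriveV fxy0 dfxy_x).
have duy := is_derive1_mul (is_derive1_mul (is_derive_cst x (y : K^o) 1) dfy)
  (numfield_is_deriveV fxy0 dfxy_y).
have dvx := is_derive1_mulr_cst x y.
have dvy := is_derive1_mull_cst y x.
split; first by split; split; apply: ex_derive.
rewrite /jac_det2 /pdx /pdy (derive1_val dux) (derive1_val duy).
rewrite (derive1_val dvx) (derive1_val dvy) /=.
by field.
Qed.

Definition S1 {F : fieldType} : F -> F -> F * F := Smap (fun t => 1 - t).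

Lemma S1_subr_mul (F : fieldType) (x y : F) : 1 - x * y != 0 ->
  (1 - (S1 x y).1) * (1 - (S1 x y).2) = 1 - x.
Proof. by move=> xy1; rewrite /=; field. Qed.

Lemma S1_pentagon (F : fieldType) :
  pentagon_on [set t | let: (x1, x2, x3) := t in
    [/\ 1 - x2 * x3 != 0, 1 - x1 * x2 != 0 & 1 - x1 * x2 * x3 != 0]] (@S1 F).
Proof.
move=> [[x1 x2] x3] [h23 h12 h123]; rewrite /S12 /S13 /S23 /=.
have h1_23 : 1 - x1 * (x2 * x3) != 0 by rewrite mulrA.
(* [field] must see this nested denominator in closed form to know it is nonzero. *)
have -> : 1 - x1 * (1 - x2 * x3) / (1 - x1 * (x2 * x3)) * (x2 * (1 - x3) / (1 - x2 * x3))
    = (1 - x1 * x2) / (1 - x1 * (x2 * x3)).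
  by field; apply/andP.
congr (_, _, _); last by rewrite mulrA.
- by field; rewrite h23 h12 h1_23.
- by field; apply/andP.
Qed.

Lemma liouville_integrable2_intro (K : numFieldType) (D : set (K * K))
    (S : K -> K -> K * K) (m I : K -> K -> K) :
  (forall x y, D (x, y) -> m x y != 0) ->
  (forall x y, D (x, y) ->
     map_has_partials S x y /\ m (S x y).1 (S x y).2 / m x y = jac_det2 S x y) ->
  invariant_on D S I -> functionally_independent D I ->
  liouville_integrable2 D S.
Proof.
move=> m0 mS SI indepI; exists m, I; split=> //; split=> // x y Dxy.
have [SP <-] := mS x y Dxy; split=> //.
by rewrite divfK // m0.
Qed.

Lemma mul_functionally_independent (K : numFieldType) (D : set (K * K))
    (f : K -> K) :
  (forall x y, D (x, y) -> derivable (f : K^o -> K^o) y 1) ->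
  (exists x y, D (x, y) /\ f y != 0) ->
  functionally_independent D (fun x y => x * f y).
Proof.
move=> df [x0 [y0 [D0 fy0]]]; split.
  move=> x y Dxy.
  have dx := is_derive1_mulr_cst x (f y).
  have dy := is_derive1_mul (is_derive_cst x (y : K^o) 1) (derivableP (df x y Dxy)).
  by split; apply: ex_derive.
exists x0, y0; split=> //; left.
by rewrite /pdx (derive1_val (is_derive1_mulr_cst x0 (f y0))).
Qed.

Section PentagonConjugation.
Variables (Y Z : Type) (D : set Y) (phi : Y -> Z).
Variables (S : Y -> Y -> Y * Y) (T : Z -> Z -> Z * Z).
Hypothesis phi_inj : forall a b, D a -> D b -> phi a = phi b -> a = b.
Hypothesis S_stable : forall x y, D x -> D y -> D (S x y).1 /\ D (S x y).2.
Hypothesis S_conj : forall x y, D x -> D y ->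
  (phi (S x y).1, phi (S x y).2) = T (phi x) (phi y).

Let D3 (t : Y * Y * Y) := let: (a, b, c) := t in [/\ D a, D b & D c].
Let phi3 (t : Y * Y * Y) : Z * Z * Z := let: (a, b, c) := t in (phi a, phi b, phi c).

Let phi3_inj t t' : D3 t -> D3 t' -> phi3 t = phi3 t' -> t = t'.
Proof.
case: t t' => [[a b] c] [[a' b'] c'] [Da Db Dc] [Da' Db' Dc'] [].
by move=> /(phi_inj _ _ Da Da') -> /(phi_inj _ _ Db Db') -> /(phi_inj _ _ Dc Dc') ->.
Qed.

Let S12_conj t : D3 t -> D3 (S12 S t) /\ phi3 (S12 S t) = S12 T (phi3 t).
Proof.
case: t => [[a b] c] [Da Db Dc]; have [Du Dv] := S_stable _ _ Da Db.
by split; [split | rewrite /= -(S_conj _ _ Da Db)].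
Qed.

Let S13_conj t : D3 t -> D3 (S13 S t) /\ phi3 (S13 S t) = S13 T (phi3 t).
Proof.
case: t => [[a b] c] [Da Db Dc]; have [Du Dv] := S_stable _ _ Da Dc.
by split; [split | rewrite /= -(S_conj _ _ Da Dc)].
Qed.

Let S23_conj t : D3 t -> D3 (S23 S t) /\ phi3 (S23 S t) = S23 T (phi3 t).
Proof.
case: t => [[a b] c] [Da Db Dc]; have [Du Dv] := S_stable _ _ Db Dc.
by split; [split | rewrite /= -(S_conj _ _ Db Dc)].
Qed.

Lemma pentagon_on_conj (E : set (Z * Z * Z)) :
  pentagon_on E T -> (forall a b c, D a -> D b -> D c -> E (phi a, phi b, phi c)) ->
  pentagon_on [set t | let: (a, b, c) := t in [/\ D a, D b & D c]] S.
Proof.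
move=> pentT DE t Dt.
have [D23 e23] := S23_conj _ Dt; have [D13 e13] := S13_conj _ D23.
have [D12 e12] := S12_conj _ D13; have [D12' e12'] := S12_conj _ Dt.
have [D23' e23'] := S23_conj _ D12'.
apply: phi3_inj => //; rewrite e12 e13 e23 e23' e12'.
by case: t Dt {D23 e23 D13 e13 D12 e12 D12' e12' D23' e23'} => [[a b] c] [Da Db Dc];
  apply: pentT; apply: DE.
Qed.

End PentagonConjugation.

Section CaseOne.
Context {R : realType}.
Local Notation C := R[i].

Lemma fC_is_derive (z : C) : is_derive (z : C^o) 1 (@fC R : C^o -> C^o) (-1).
Proof.
have d1 := is_derive_cst (1 : C^o) (z : C^o) 1.
exact: is_derive_eq (is_derive1_sub d1 (is_derive_id (z : C^o) 1)) (sub0r 1).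
Qed.

Lemma SC_poisson (x y : C) : [/\ y != 0, fC x != 0 & fC (x * y) != 0] ->
  map_has_partials (@SC R) x y /\ mC (SC x y).1 (SC x y).2 / mC x y = jac_det2 (@SC R) x y.
Proof.
case=> y0 x1 xy1; have [SP ->] := Smap_jacobian (fC_is_derive y) (fC_is_derive (x * y)) xy1.
split=> //; move: x1 xy1; rewrite /mC /SC /Smap /fC /= => x1 xy1.
by field; apply/and3P.
Qed.

Lemma SC_liouville : liouville_integrable2
  [set p : C * C | [/\ p.2 != 0, fC p.1 != 0 & fC (p.1 * p.2) != 0]] (@SC R).
Proof.
apply: (@liouville_integrable2_intro _ _ _ (@mC R) (@IC R)).
- by move=> x y [y0 x1 _]; rewrite /mC expr0 mulr1 mulf_neq0.
- by move=> x y; apply: SC_poisson.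
- by move=> x y [_ _ xy1]; apply: Smap_invariant.
apply: (@mul_functionally_independent _ _ (@fC R)) => [x y _|].
  by case: (fC_is_derive y).
have fC2 : fC 2 = -1 :> C by rewrite /fC; ring.
exists 0, 2; split; last by rewrite fC2 oppr_eq0 oner_eq0.
by rewrite /= /fC mul0r subr0 oner_eq0 pnatr_eq0.
Qed.

End CaseOne.

Section UnitInterval.
Context {R : realType}.
Implicit Types (b s x y : R).

Lemma powR_invr b s : 0 <= b -> b^-1 `^ s = (b `^ s)^-1.
Proof. by move=> b0; rewrite -powR_inv1 // -powRrM mulrC powRrM powR_inv1 ?powR_ge0. Qed.

Lemma X01_powR {s x} : 0 < s -> 0 <= x -> X01 (x `^ s) <-> X01 x.
Proof.
move=> s0 x0; rewrite /X01 /=.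
have -> : (x `^ s < 1) = (x < 1).
  have mono := le_mono_in (gt0_ltr_powR s0).
  have one_s : 1 `^ s = 1 :> R by rewrite powR1.
  by rewrite !ltNge -{1}one_s mono ?nnegrE.
have -> : (0 < x `^ s) = (0 < x).
  move: x0; rewrite le_eqVlt => /predU1P[<- | x_gt0].
    by rewrite powR0 ?gt_eqF.
  by rewrite powR_gt0 // x_gt0.
done.
Qed.

Lemma X01M {x y} : X01 x -> X01 y -> X01 (x * y).
Proof. by rewrite /X01 /= => /andP[x0 x1] /andP[y0 y1]; apply/andP; split; nra. Qed.

Lemma X01_subr_gt0 {x} : X01 x -> 0 < 1 - x.
Proof. by rewrite /X01 /= subr_gt0 => /andP[]. Qed.

Lemma X01_subr_neq0 {x} : X01 x -> 1 - x != 0.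
Proof. by move=> /X01_subr_gt0 /lt0r_neq0. Qed.

Lemma S1_X01 {x y} : X01 x -> X01 y -> X01 (S1 x y).1 /\ X01 (S1 x y).2.
Proof.
move=> x01 y01; split; last exact: X01M.
have xy1 := X01_subr_gt0 (X01M x01 y01).
move: x01 y01; rewrite /X01 /= => /andP[x0 x1] /andP[y0 y1].
apply/andP; split; first by rewrite divr_gt0 // mulr_gt0 // subr_gt0.
by rewrite ltr_pdivrMr // mul1r; nra.
Qed.

End UnitInterval.

Section CaseGen.
Context {R : realType} {alpha : R}.
Hypothesis alpha_gt0 : 0 < alpha.
Implicit Types x y : R.
Local Notation f := (fR alpha).
Local Notation "x ^a" := (x `^ alpha) (at level 2, format "x ^a").

(* The proofs generalize the values of [f] before rewriting or calling [field]:
   unifying terms that contain [fR] unfolds [powR] into [expR] and [ln], which is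
   extremely slow. *)

Let X01_gt0 {x} : X01 x -> 0 < x.
Proof. by case/andP. Qed.

Let X01_ge0 {x} : X01 x -> 0 <= x.
Proof. by move=> /X01_gt0 /ltW. Qed.

Let X01_powa {x} : X01 x -> X01 x^a.
Proof. by move=> x01; apply/(X01_powR alpha_gt0 (X01_ge0 x01)). Qed.

Lemma fR_X01 {x} : X01 x -> X01 (f x).
Proof.
move=> x01; have := X01_subr_gt0 (X01_powa x01) => /ltW x1.
have alphaV_gt0 : 0 < alpha^-1 by rewrite invr_gt0.
apply/(X01_powR alphaV_gt0 x1).
move: (X01_powa x01); rewrite /X01 /= => /andP[a0 a1].
by apply/andP; split; lra.
Qed.

Lemma powR_fR {x} : X01 x -> (f x)^a = 1 - x^a.
Proof.
move=> x01; have := X01_subr_gt0 (X01_powa x01) => /ltW x1.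
by rewrite /fR -powRrM mulVf ?gt_eqF // powRr1.
Qed.

Lemma SR_powR {x y} : X01 x -> X01 y ->
  (((SR alpha x y).1)^a, ((SR alpha x y).2)^a) = S1 x^a y^a.
Proof.
move=> x01 y01; have xy01 := X01M x01 y01.
have x0 := X01_ge0 x01; have y0 := X01_ge0 y01.
move: (X01_ge0 (fR_X01 y01)) (X01_ge0 (fR_X01 xy01)) (powR_fR y01) (powR_fR xy01).
rewrite /SR /S1 /Smap /=; move: (f y) (f (x * y)) => F G F0 G0 eF eG.
by rewrite powRM ?mulr_ge0 ?invr_ge0 // powRM // powR_invr // eF eG powRM.
Qed.

Lemma SR_X01 {x y} : X01 x -> X01 y -> X01 (SR alpha x y).1 /\ X01 (SR alpha x y).2.
Proof.
move=> x01 y01; split; last exact: X01M.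
have u0 : 0 <= (SR alpha x y).1.
  exact: divr_ge0 (mulr_ge0 (X01_ge0 x01) (X01_ge0 (fR_X01 y01)))
                  (X01_ge0 (fR_X01 (X01M x01 y01))).
apply/(X01_powR alpha_gt0 u0); case: (SR_powR x01 y01) => -> _.
exact: (S1_X01 (X01_powa x01) (X01_powa y01)).1.
Qed.

Let powR_inj {x y} : X01 x -> X01 y -> x^a = y^a -> x = y.
Proof. by move=> /X01_ge0 x0 /X01_ge0 y0; apply: (powR_injective alpha_gt0). Qed.

Lemma fR_SR_mul {x y} : X01 x -> X01 y ->
  f (SR alpha x y).1 * f (SR alpha x y).2 = f x.
Proof.
move=> x01 y01; have [u01 v01] := SR_X01 x01 y01.
case: (SR_powR x01 y01) => eU eV.
move: (powR_fR u01) (powR_fR v01) (powR_fR x01) (fR_X01 u01) (fR_X01 v01) (fR_X01 x01).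
move: (f (SR alpha x y).1) (f (SR alpha x y).2) (f x) => Fu Fv Fx eFu eFv eFx Fu01 Fv01 Fx01.
apply: powR_inj; [exact: X01M | by [] |].
rewrite powRM ?X01_ge0 // eFu eFv eFx eU eV.
by apply/S1_subr_mul/X01_subr_neq0/X01M; apply: X01_powa.
Qed.

Lemma SR_pentagon :
  pentagon_on [set t | let: (x1, x2, x3) := t in [/\ X01 x1, X01 x2 & X01 x3]] (SR alpha).
Proof.
apply: (@pentagon_on_conj _ _ _ (fun x => x^a) _ _ _ _ _ _ (S1_pentagon R)).
- by move=> x y; apply: powR_inj.
- by move=> x y; apply: SR_X01.
- by move=> x y; apply: SR_powR.
move=> x1 x2 x3 /X01_powa x01 /X01_powa x02 /X01_powa x03.
split; apply: X01_subr_neq0; first exact: X01M x02 x03.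
  exact: X01M x01 x02.
exact: X01M (X01M x01 x02) x03.
Qed.

Lemma fR_is_derive {x} : X01 x ->
  is_derive (x : R^o) 1 (f : R^o -> R^o) (- f x * x^a / (x * (1 - x^a))).
Proof.
move=> x01; have x_gt0 := X01_gt0 x01.
have xa1 := X01_subr_gt0 (X01_powa x01).
have dg := is_derive1_sub (is_derive_cst (1 : R^o) (x : R^o) 1) (is_derive1_powR alpha x_gt0).
have df := @is_derive1_comp R (fun t => t `^ alpha^-1) (fun t => 1 - t^a) x _ _
  (is_derive1_powR alpha^-1 xa1) dg.
apply: (is_derive_eq df).
rewrite (powRB (x := 1 - x^a)) ?(lt0r_neq0 xa1) ?implybT //.
rewrite (powRB (x := x)) ?(lt0r_neq0 x_gt0) ?implybT //.
rewrite !powRr1 ?ltW // /fR.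
move: (x^a) ((1 - x^a) `^ alpha^-1) xa1 => T F T1.
by field; rewrite !gt_eqF.
Qed.

Lemma SR_poisson {x y} : X01 x -> X01 y ->
  map_has_partials (SR alpha) x y /\
  mR alpha (SR alpha x y).1 (SR alpha x y).2 / mR alpha x y = jac_det2 (SR alpha) x y.
Proof.
move=> x01 y01; have xy01 := X01M x01 y01.
have [x_gt0 y_gt0] := (X01_gt0 x01, X01_gt0 y01).
have fy_gt0 := X01_gt0 (fR_X01 y01); have fxy_gt0 := X01_gt0 (fR_X01 xy01).
have fu_gt0 := X01_gt0 (fR_X01 (SR_X01 x01 y01).1).
have fuv := fR_SR_mul x01 y01.
rewrite -[SR alpha]/(Smap f).
have [SP ->] := Smap_jacobian (fR_is_derive y01) (fR_is_derive xy01) (lt0r_neq0 fxy_gt0).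
split=> //; rewrite /mR /= -fuv /=.
have ya1 := X01_subr_gt0 (X01_powa y01); have efy := powR_fR y01.
move: fu_gt0 {fuv}; move: (f (x * f y / f (x * y))) => Fu Fu0.
move: fy_gt0 fxy_gt0 efy; move: (f y) (f (x * y)) => Fy Fxy Fy0 Fxy0 eFy.
rewrite powRM ?ltW //.
rewrite (powRB (x := Fxy)) ?(lt0r_neq0 Fxy0) ?implybT //.
rewrite (powRB (x := Fy)) ?(lt0r_neq0 Fy0) ?implybT //.
rewrite !powRr1 ?ltW // eFy.
have [Fua0 Fxya0] := (powR_gt0 alpha Fu0, powR_gt0 alpha Fxy0).
move: (Fu^a) (Fxy^a) (y^a) Fua0 Fxya0 ya1 => A B T A0 B0 T1.
by field; rewrite !lt0r_neq0.
Qed.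

Lemma SR_invariant {x y} : X01 x -> X01 y ->
  IR alpha (SR alpha x y).1 (SR alpha x y).2 = IR alpha x y.
Proof. by move=> x01 y01; apply/Smap_invariant/lt0r_neq0/X01_gt0/fR_X01/X01M. Qed.

Lemma SR_liouville : liouville_integrable2 [set p : R * R | X01 p.1 /\ X01 p.2] (SR alpha).
Proof.
apply: (@liouville_integrable2_intro _ _ _ (mR alpha) (IR alpha)).
- move=> x y [x01 y01]; apply: lt0r_neq0.
  have fx_gt0 := X01_gt0 (fR_X01 x01); have fy_gt0 := X01_gt0 (fR_X01 y01).
  exact: mulr_gt0 (mulr_gt0 (X01_gt0 y01) (powR_gt0 _ fy_gt0)) (powR_gt0 _ fx_gt0).
- by move=> x y [x01 y01]; apply: SR_poisson.
- by move=> x y [x01 y01]; apply: SR_invariant.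
apply: (@mul_functionally_independent _ _ f) => [x y [_ y01]|].
  by case: (fR_is_derive y01).
have half01 : X01 (2^-1 : R).
  by rewrite /X01 /= invr_gt0 ltr0n invf_lt1 ?ltr0n ?ltr1n.
by exists 2^-1, 2^-1; split; [split | apply/lt0r_neq0/X01_gt0/fR_X01].
Qed.

End CaseGen.

Theorem mainTheorem4 (R : realType) (alpha : R) (halpha : 0 < alpha) :
  (alpha = 1 ->
     (forall x y : R[i], fC (x * y) != 0 ->
        fC (SC x y).1 * fC (SC x y).2 = fC x)
  /\ pentagon_on [set t | let: (x1, x2, x3) := t in
                   [/\ fC (x2 * x3) != 0, fC (x1 * x2) != 0 &
                       fC (x1 * x2 * x3) != 0]] (@SC R)
  /\ (forall x y : R[i], [/\ y != 0, fC x != 0 & fC (x * y) != 0] ->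
        map_has_partials (@SC R) x y /\
        mC (SC x y).1 (SC x y).2 / mC x y = jac_det2 (@SC R) x y)
  /\ (forall x y : R[i], fC (x * y) != 0 ->
        IC (SC x y).1 (SC x y).2 = IC x y)
  /\ liouville_integrable2
       [set p : R[i] * R[i] | [/\ p.2 != 0, fC p.1 != 0 & fC (p.1 * p.2) != 0]]
       (@SC R))
  /\
  (alpha != 1 ->
     (forall x y, X01 x -> X01 y -> X01 (SR alpha x y).1 /\ X01 (SR alpha x y).2)
  /\ (forall x y, X01 x -> X01 y ->
        fR alpha (SR alpha x y).1 * fR alpha (SR alpha x y).2 = fR alpha x)
  /\ pentagon_on [set t | let: (x1, x2, x3) := t in
                   [/\ X01 x1, X01 x2 & X01 x3]] (SR alpha)
  /\ (forall x y, X01 x -> X01 y ->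
        map_has_partials (SR alpha) x y /\
        mR alpha (SR alpha x y).1 (SR alpha x y).2 / mR alpha x y
          = jac_det2 (SR alpha) x y)
  /\ (forall x y, X01 x -> X01 y ->
        IR alpha (SR alpha x y).1 (SR alpha x y).2 = IR alpha x y)
  /\ liouville_integrable2 [set p : R * R | X01 p.1 /\ X01 p.2] (SR alpha)).
Proof.
split=> [_ | _].
  split; first by move=> x y; apply: S1_subr_mul.
  split; first exact: S1_pentagon.
  split; first by move=> x y; apply: SC_poisson.
  split; first by move=> x y; apply: Smap_invariant.
  exact: SC_liouville.
split; first by move=> x y; apply: (SR_X01 halpha).
split; first by move=> x y; apply: (fR_SR_mul halpha).
split; first exact: (SR_pentagon halpha).
split; first by move=> x y; apply: (SR_poisson halpha).
split; first by move=> x y; apply: (SR_invariant halpha).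
exact: (SR_liouville halpha).
Qed.
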